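(* Let $n\geq4$, $D_n=\{x\in\mathbb{Z}^n:\sum_i x_i\equiv0\bmod2\}$, $\mathcal{P}$ its Voronoi region with vertex set $V_{\mathcal{P}}$, and $D_n^\#$ the dual lattice. Let $\tilde G$ be the Cayley graph on $\frac12D_n^\#$ with generating set $\frac12V_{\mathcal{P}}$, with graph distance $\tilde d$. Then for all $u_1,u_2\in\frac12D_n^\#$, $\tilde d(u_1,u_2)=2$ implies $\Vert u_1-u_2\Vert_{\mathcal{P}}=1$.
   Context: The Voronoi region of a lattice $\Lambda\subset\mathbb{R}^n$ is $\{z:\langle z-x,z-x\rangle\geq\langle z,z\rangle\ \forall x\in\Lambda\}$; $D_n^\#=\{y:\langle x,y\rangle\in\mathbb{Z}\ \forall x\in D_n\}$. $\Vert x\Vert_{\mathcal{P}}=\inf\{\lambda\geq0:x\in\lambda\mathcal{P}\}$, which for this $\mathcal{P}$ equals $\max_{i\neq j}(|x_i|+|x_j|)$. It is known that $V_{\mathcal{P}}$ consists of the $2n$ vectors $\pm e_i$ and the $2^n$ vectors $(\pm\frac12,\dots,\pm\frac12)$. In the Cayley graph, $x,y$ are adjacent iff $x-y\in\frac12V_{\mathcal{P}}$. *)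

From HB Require Import structures.
From mathcomp Require Import all_boot all_order all_algebra.
Set Implicit Arguments. Unset Strict Implicit. Unset Printing Implicit Defensive.
Import Order.TTheory GRing.Theory Num.Theory.
Local Open Scope ring_scope.

Section Defs.
Variables (R : realFieldType) (n : nat).
Notation vec := 'rV[R]_n.

Definition is_intR (r : R) : Prop := exists z : int, r = z%:~R.

Definition dotv (x y : vec) : R := \sum_(i < n) x 0 i * y 0 i.

Definition Dn (x : vec) : Prop :=
  exists z : 'I_n -> int, (forall i, x 0 i = (z i)%:~R) /\ (2 %| \sum_(i < n) z i)%Z.

Definition Dn_dual (y : vec) : Prop := forall x, Dn x -> is_intR (dotv x y).

Definition voronoiDn (z : vec) : Prop :=
  forall x, Dn x -> dotv (z - x) (z - x) >= dotv z z.

Definition vertexDn (v : vec) : Prop :=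
  voronoiDn v /\
  forall a b t, voronoiDn a -> voronoiDn b -> 0 < t < 1 ->
    v = t *: a + (1 - t) *: b -> a = b.

Definition half (S : vec -> Prop) (x : vec) : Prop := S (2%:R *: x).

Definition Gvert := half Dn_dual.
Definition Gadj (x y : vec) : Prop := half vertexDn (x - y).

Definition walk (k : nat) (u v : vec) : Prop :=
  exists w : nat -> vec,
    [/\ w 0%N = u, w k = v, (forall i, (i <= k)%N -> Gvert (w i))
      & forall i, (i < k)%N -> Gadj (w i) (w i.+1)].

Definition gdist_eq (u v : vec) (k : nat) : Prop :=
  walk k u v /\ forall m, (m < k)%N -> ~ walk m u v.

Definition in_scaled (l : R) (x : vec) : Prop :=
  exists z, voronoiDn z /\ x = l *: z.

Definition normP_eq (x : vec) (c : R) : Prop :=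
  (forall l, 0 <= l -> in_scaled l x -> c <= l) /\
  (forall b, (forall l, 0 <= l -> in_scaled l x -> b <= l) -> b <= c).

End Defs.

(* The Voronoi region P of D_n is {z : |z_i| + |z_j| <= 1 for all i <> j}.
   Testing z against the lattice points ±e_i ± e_j gives one inclusion; for the
   other, x_l^2 - 2 z_l x_l >= 1 - 2|z_l| at the odd coordinates of x in D_n
   (and >= 0 at the even ones), and the odd coordinates are evenly many, so
   they can be paired off using |z_i| + |z_j| <= 1.
   For n >= 3 the vertices of P are exactly ±e_i and (±1/2, ..., ±1/2): any
   other point of P is the midpoint of a nontrivial segment inside P.
   A walk u1 -> w -> u2 gives 2 (u1 - u2) = a + b with a, b such vertices;
   a + b is neither 0 (distance 0) nor a vertex (distance 1), and a case
   analysis shows |a_i + b_i| + |a_j + b_j| = 2 for some i <> j, while the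
   triangle inequality bounds every such sum by 2; halving gives
   ||u1 - u2||_P = 1. *)

From mathcomp Require Import all_boot all_order all_algebra zify ring lra.
Import Order.TTheory GRing.Theory Num.Theory.
Local Open Scope ring_scope.

Section Preliminaries.
Set Implicit Arguments.
Unset Strict Implicit.

Lemma exists_notin n (A : {set 'I_n}) : (#|A| < n)%N -> exists l, l \notin A.
Proof.
move=> An; have := cardsC A; rewrite card_ord => cardA.
have /card_gt0P[l] : (0 < #|~: A|)%N by lia.
by rewrite inE; exists l.
Qed.

Lemma exists_neq n (i : 'I_n) : (1 < n)%N -> exists j, j != i.
Proof.
move=> n2; have [|j] := @exists_notin _ [set i]; first by rewrite cards1.
by rewrite inE; exists j.
Qed.

Lemma exists_neq2 n (p q : 'I_n) : (2 < n)%N -> exists l, (l != p) && (l != q).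
Proof.
move=> n3; have [|l] := @exists_notin _ [set p; q]; first by rewrite cards2; case: (p != q); lia.
by rewrite !inE negb_or; exists l.
Qed.

Lemma sum_if2 (V : nmodType) n (i j : 'I_n) (a b : V) : i != j ->
  \sum_l (if l == i then a else if l == j then b else 0) = a + b.
Proof.
move=> ij; rewrite (bigD1 i) //= eqxx (bigD1 j) 1?eq_sym //= (negbTE ij) eqxx.
by rewrite big1 ?addr0 // => l /andP[/negbTE -> /negbTE ->].
Qed.

Lemma even_card_odd_entries (I : finType) (w : I -> int) :
  (2 %| \sum_i w i)%Z -> ~~ odd #|[pred i | odd `|w i|%N]|.
Proof.
set S := [pred i | _]; have split_w : \sum_i w i = (\sum_i (w i %/ 2)%Z) * 2 + #|S|%:Z.
  rewrite -sum1_card -natz natr_sum [X in _ + X]big_mkcond mulr_suml -big_split /=.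
  by apply: eq_bigr => i _; rewrite [in LHS](divz_eq (w i) 2) inE; case: ifP; lia.
by rewrite split_w; lia.
Qed.

Variable R : realFieldType.

Lemma normD_le_signs (a b c : R) :
  a + b <= c -> a - b <= c -> - a + b <= c -> - a - b <= c -> `|a| + `|b| <= c.
Proof.
by case: (lerP 0 a) => ha; case: (lerP 0 b) => hb;
  rewrite ?(ger0_norm ha) ?(ger0_norm hb) ?(ltr0_norm ha) ?(ltr0_norm hb); lra.
Qed.

Lemma normD_cases (a b : R) : `|a + b| = `|a| + `|b| \/ `|a + b| = `|(`|a| - `|b|)|.
Proof.
wlog a0 : a b / 0 <= a => [wlog_a0|].
  have [|a_neg] := lerP 0 a; first exact: wlog_a0.
  by have := wlog_a0 (- a) (- b); rewrite -opprD !normrN oppr_ge0; apply; apply: ltW.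
have [b0|b_neg] := lerP 0 b; first by left; rewrite !ger0_norm ?addr_ge0.
by right; rewrite (ger0_norm a0) (ltr0_norm b_neg) opprK.
Qed.

Lemma conv_le1_eq1 (t x y : R) :
  0 < t < 1 -> x <= 1 -> y <= 1 -> t * x + (1 - t) * y = 1 -> x = 1.
Proof. by case/andP=> t0 t1 x1 y1 e; nra. Qed.

Lemma int_sq_sub_ge (w : int) (c : R) : `|c| <= 1 ->
  (if odd `|w|%N then 1 - 2 * `|c| else 0) <= w%:~R ^+ 2 - 2 * c * w%:~R.
Proof.
move=> c1; have normw : `|w%:~R : R| = (`|w|%N)%:R by rewrite -intr_norm natr_absz.
have cw : c * w%:~R <= `|c| * (`|w|%N)%:R by rewrite -normw -normrM ler_norm.
rewrite -[w%:~R ^+ 2]real_normK ?num_real // normw.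
have := normr_ge0 c; move: cw; set m := `|w|%N.
have [->|[[m2 /negbTE ->]|[m1 ->]]] :
  m = 0%N \/ ((2 <= m)%N /\ ~~ odd m \/ (1 <= m)%N /\ odd m) by lia.
- by rewrite mulr0 expr0n /=; lra.
- by rewrite -(ler_nat R) in m2; nra.
- by rewrite -(ler_nat R) in m1; nra.
Qed.

Lemma even_subset_sum_ge0 (I : finType) (S : {pred I}) (s : I -> R) :
  ~~ odd #|S| -> (forall i j, i != j -> s i + s j <= 1) ->
  0 <= \sum_(l in S) (1 - 2 * s l).
Proof.
move=> evS s_pair.
have [k /andP[kS sk] | small] := pickP [pred k | (k \in S) && (1/2 < s k)]; last first.
  by apply: sumr_ge0 => l lS; have := small l; rewrite /= lS /= => /negbT; rewrite -leNgt; lra.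
have [j jS] : exists j, j \in [predD1 S & k].
  by apply/card_gt0P; move: evS; rewrite (cardD1 k) kS; case: #|_|.
move: jS; rewrite inE => /andP[jk jS].
rewrite (bigD1 k) //= (bigD1 j) /=; last by rewrite jS jk.
have rest : 0 <= \sum_(i | (i \in S) && (i != k) && (i != j)) (1 - 2 * s i).
  by apply: sumr_ge0 => i /andP[/andP[_ ik] _]; have := s_pair i k ik; lra.
by have := s_pair j k jk; lra.
Qed.

End Preliminaries.

Section VoronoiRegion.
Set Implicit Arguments.
Unset Strict Implicit.
Variables (R : realFieldType) (n : nat).
Implicit Types (x z v a b p : 'rV[R]_n).

Definition normP_le1 z := forall i j : 'I_n, i != j -> `|z 0 i| + `|z 0 j| <= 1.

Lemma voronoiE z :
  voronoiDn z <-> forall x, Dn x -> 0 <= \sum_i (x 0 i ^+ 2 - 2 * z 0 i * x 0 i).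
Proof.
have expand x : dotv (z - x) (z - x) - dotv z z = \sum_i (x 0 i ^+ 2 - 2 * z 0 i * x 0 i).
  by rewrite /dotv -sumrB; apply: eq_bigr => i _; rewrite !mxE; ring.
by split=> vz x /vz; rewrite -expand subr_ge0.
Qed.

Lemma voronoi_pair z (i j : 'I_n) (s t : int) : voronoiDn z -> i != j -> (2 %| s + t)%Z ->
  0 <= s%:~R ^+ 2 - 2 * z 0 i * s%:~R + (t%:~R ^+ 2 - 2 * z 0 j * t%:~R).
Proof.
move=> /voronoiE vz ij st.
pose w l : int := if l == i then s else if l == j then t else 0.
have Dw : Dn (\row_l (w l)%:~R : 'rV[R]_n) by exists w; split=> [l|]; rewrite ?mxE ?sum_if2.
rewrite -(sum_if2 _ _ ij); apply: le_trans (vz _ Dw) _; apply: ler_sum => l _.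
by rewrite mxE /w; case: eqP => [->|_]; [|case: eqP => [->|_]];
  rewrite ?expr0n /= ?mulr0 ?subr0 ?lexx.
Qed.

Lemma voronoi_normP_le1 z : voronoiDn z -> normP_le1 z.
Proof.
move=> vz i j ij; apply: normD_le_signs.
- by have := voronoi_pair (s := 1) (t := 1) vz ij isT; lra.
- by have := voronoi_pair (s := 1) (t := -1) vz ij isT; rewrite rmorphN; lra.
- by have := voronoi_pair (s := -1) (t := 1) vz ij isT; rewrite rmorphN; lra.
- by have := voronoi_pair (s := -1) (t := -1) vz ij isT; rewrite rmorphN; lra.
Qed.

Lemma normP_le1_voronoi z : (1 < n)%N -> normP_le1 z -> voronoiDn z.
Proof.
move=> n2 zP; apply/voronoiE => x [w [xw even_w]].
have z1 l : `|z 0 l| <= 1.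
  by have [j jl] := exists_neq l n2; have := zP j l jl; have := normr_ge0 (z 0 j); lra.
apply: le_trans (even_subset_sum_ge0 (s := fun l => `|z 0 l|) (even_card_odd_entries even_w) zP) _.
rewrite big_mkcond; apply: ler_sum => l _; rewrite xw inE; exact: int_sq_sub_ge.
Qed.

Lemma normP_le1_profile v k (M : R) : 1/2 <= M -> `|v 0 k| = M ->
  (forall i, i != k -> `|v 0 i| = 1 - M) -> normP_le1 v.
Proof.
move=> M_ge vk others i j.
have [-> kj | ik] := eqVneq i k; first by rewrite vk others 1?eq_sym //; lra.
have [-> _ | jk _] := eqVneq j k; first by rewrite vk others //; lra.
by rewrite !others //; lra.
Qed.

Lemma vertex_no_segment v p : vertexDn v ->
  (forall s : R, `|s| <= 1 -> voronoiDn (v + s *: p)) -> p = 0.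
Proof.
move=> [_ extreme] segment.
have half01 : 0 < (1/2 : R) < 1 by apply/andP; split; lra.
have mid : v = 1/2 *: (v + 1 *: p) + (1 - 1/2) *: (v + -1 *: p).
  by apply/rowP => l; rewrite !mxE; lra.
have := extreme _ _ _ (segment 1 _) (segment (-1) _) half01 mid.
rewrite normrN normr1 lexx => /(_ isT isT) /rowP ends.
by apply/rowP => l; have := ends l; rewrite !mxE; lra.
Qed.

Lemma vertex_tight_pair v i : (1 < n)%N -> vertexDn v ->
  exists2 j, j != i & `|v 0 i| + `|v 0 j| = 1.
Proof.
move=> n2 vV; have vP := voronoi_normP_le1 vV.1.
have [j0 j0i] := exists_neq i n2.
case: (@arg_maxP _ R _ j0 (fun j => j != i) (fun j => `|v 0 j|) j0i) => m mi m_max.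
have [tight | loose] := eqVneq (`|v 0 i| + `|v 0 m|) 1; first by exists m.
have lt1 : `|v 0 i| + `|v 0 m| < 1 by rewrite lt_neqAle loose vP // eq_sym.
pose e := (1 - `|v 0 i| - `|v 0 m|) / 2.
have e_gt0 : 0 < e by rewrite /e; lra.
pose p : 'rV[R]_n := \row_l (if l == i then e else 0).
suff /rowP /(_ i) : p = 0 by rewrite !mxE eqxx; lra.
apply: vertex_no_segment vV _ => s s1; apply: normP_le1_voronoi n2 _ => q r.
have near_i l : l != i -> `|v 0 i + s * e| + `|v 0 l| <= 1.
  move=> /m_max /= lm; have := ler_normD (v 0 i) (s * e).
  have := ler_piMl (ltW e_gt0) s1; rewrite normrM (gtr0_norm e_gt0) /e; lra.
rewrite /p !mxE; have [-> ir | qi qr] := eqVneq q i.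
  by rewrite eq_sym in ir; rewrite ifN_eq // mulr0 addr0; exact: near_i.
have [-> | ri] := eqVneq r i; last by rewrite !mulr0 !addr0; exact: vP.
by rewrite mulr0 addr0 [X in X <= _]addrC; exact: near_i.
Qed.

Lemma vertex_profile v : (2 < n)%N -> vertexDn v ->
  exists k M, [/\ 1/2 <= M <= 1, `|v 0 k| = M & forall i, i != k -> `|v 0 i| = 1 - M].
Proof.
move=> n3 vV; have n2 := ltnW n3; have vP := voronoi_normP_le1 vV.1.
pose k0 : 'I_n := Ordinal (ltnW n2).
case: (@arg_maxP _ R _ k0 predT (fun j => `|v 0 j|) isT) => k _ k_max.
have others i : i != k -> `|v 0 i| = 1 - `|v 0 k|.
  move=> ik; have [j _ tight] := vertex_tight_pair i n2 vV.
  by have /= := k_max j isT; have := vP i k ik; lra.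
have [i1 /andP[i1k _]] := exists_neq2 k k n3.
have [i2 /andP[i2k i2i1]] := exists_neq2 k i1 n3.
exists k, `|v 0 k|; split=> //; apply/andP; split.
- by have := vP i2 i1 i2i1; rewrite (others i2) // (others i1) //; lra.
- by have := others i1 i1k; have := normr_ge0 (v 0 i1); lra.
Qed.

Lemma vertex_profile_cases v k (M : R) : (1 < n)%N -> vertexDn v -> 1/2 <= M <= 1 ->
  `|v 0 k| = M -> (forall i, i != k -> `|v 0 i| = 1 - M) -> M = 1/2 \/ M = 1.
Proof.
move=> n2 vV /andP[M_ge M_le] vk others.
have [-> | M_neq_half] := eqVneq M (1/2); first by left.
have [-> | M_neq1] := eqVneq M 1; first by right.
have {M_ge M_neq_half} M_gt : 1/2 < M by rewrite lt_neqAle eq_sym M_neq_half.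
have {M_le M_neq1} M_lt : M < 1 by rewrite lt_neqAle M_neq1.
pose e := (M - 1/2) * (1 - M).
have e_gt0 : 0 < e by rewrite /e; nra.
have e_small : e <= (M - 1/2) / 2 /\ e <= (1 - M) / 2 by rewrite /e; split; nra.
pose c l := if l == k then e / M else - (e / (1 - M)).
have c_le1 l : `|c l| <= 1.
  rewrite /c; case: ifP => _; rewrite ?normrN ger0_norm ?divr_ge0 ?ler_pdivrMr; lra.
pose p : 'rV[R]_n := \row_l (c l * v 0 l).
suff /rowP /(_ k) /eqP : p = 0.
  rewrite /p /c !mxE eqxx -normr_eq0 normrM vk ger0_norm ?divr_ge0 ?(ltW e_gt0) //; last lra.
  by rewrite divfK ?gt_eqF //; lra.
apply: vertex_no_segment vV _ => s s1; apply: normP_le1_voronoi n2 _.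
have norm_bump l : `|(v + s *: p) 0 l| = (1 + s * c l) * `|v 0 l|.
  rewrite /p !mxE mulrA -{1}[v 0 l]mul1r -mulrDl normrM ger0_norm //.
  have := ler_norm (- (s * c l)); rewrite normrN normrM.
  have := mulr_ile1 (normr_ge0 s) (normr_ge0 (c l)) s1 (c_le1 l); lra.
apply: (normP_le1_profile (k := k) (M := M + s * e)).
- have := ler_norm (- (s * e)); rewrite normrN normrM (gtr0_norm e_gt0).
  by have := ler_piMl (ltW e_gt0) s1; lra.
- by rewrite norm_bump vk /c eqxx; field; rewrite gt_eqF //; lra.
- move=> i ik; rewrite norm_bump others // /c ifN_eq //; field.
  by rewrite subr_eq0 eq_sym lt_eqF.
Qed.

Definition unit_vertex v := exists k, `|v 0 k| = 1 /\ forall i, i != k -> v 0 i = 0.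
Definition half_vertex v := forall i, `|v 0 i| = 1/2.
Definition VP v := unit_vertex v \/ half_vertex v.

Lemma vertex_VP v : (2 < n)%N -> vertexDn v -> VP v.
Proof.
move=> n3 vV; have [k [M [M_bounds vk others]]] := vertex_profile n3 vV.
have [M_half | M1] := vertex_profile_cases (ltnW n3) vV M_bounds vk others.
  by right=> l; have [-> | lk] := eqVneq l k; [rewrite vk | rewrite others //]; lra.
left; exists k; split; first by rewrite vk.
by move=> i ik; apply: normr0_eq0; rewrite others // M1 subrr.
Qed.

Lemma VP_normP_le1 v : VP v -> normP_le1 v.
Proof.
case=> [[k [vk others]] | v_half]; last by move=> i j _; rewrite !v_half; lra.
apply: (normP_le1_profile (M := 1)) vk _; first lra.
by move=> i ik; rewrite others // normr0 subrr.
Qed.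

Lemma unit_vertex_extreme v a b (t : R) : (1 < n)%N -> unit_vertex v ->
  normP_le1 a -> normP_le1 b -> 0 < t < 1 -> v = t *: a + (1 - t) *: b -> a = v.
Proof.
move=> n2 [k [vk others]] aP bP t01 vab.
have vk2 : v 0 k * v 0 k = 1 by rewrite -expr2 -real_normK ?num_real // vk expr1n.
have [j jk] := exists_neq k n2; rewrite eq_sym in jk.
have bound c : normP_le1 c -> v 0 k * c 0 k <= 1.
  move=> cP; apply: le_trans (ler_norm _) _; rewrite normrM vk mul1r.
  by have := cP k j jk; have := normr_ge0 (c 0 j); lra.
have ak : v 0 k * a 0 k = 1.
  apply: conv_le1_eq1 t01 (bound _ aP) (bound _ bP) _.
  by rewrite -[in RHS]vk2 [in X in _ = _ * X]vab !mxE; ring.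
have akv : a 0 k = v 0 k.
  by apply: (mulfI (x := v 0 k)); rewrite ?ak ?vk2 // -normr_eq0 vk oner_neq0.
apply/rowP => l; have [-> // | lk] := eqVneq l k.
rewrite others //; apply: normr0_eq0.
by have := aP l k lk; rewrite akv vk; have := normr_ge0 (a 0 l); lra.
Qed.

Lemma half_vertex_extreme v a b (t : R) : (2 < n)%N -> half_vertex v ->
  normP_le1 a -> normP_le1 b -> 0 < t < 1 -> v = t *: a + (1 - t) *: b -> a = v.
Proof.
move=> n3 v_half aP bP t01 vab.
have vl2 l : v 0 l * v 0 l = 1/4.
  by rewrite -expr2 -real_normK ?num_real // v_half; lra.
have bound c : normP_le1 c -> forall i j, i != j -> 2 * v 0 i * c 0 i + 2 * v 0 j * c 0 j <= 1.
  move=> cP i j ij; have := ler_norm (v 0 i * c 0 i); have := ler_norm (v 0 j * c 0 j).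
  by rewrite !normrM !v_half; have := cP i j ij; lra.
have tight i j : i != j -> 2 * v 0 i * a 0 i + 2 * v 0 j * a 0 j = 1.
  move=> ij; apply: conv_le1_eq1 t01 (bound _ aP i j ij) (bound _ bP i j ij) _.
  have -> : t * (2 * v 0 i * a 0 i + 2 * v 0 j * a 0 j) +
      (1 - t) * (2 * v 0 i * b 0 i + 2 * v 0 j * b 0 j) =
    2 * (v 0 i * (t * a 0 i + (1 - t) * b 0 i)) +
      2 * (v 0 j * (t * a 0 j + (1 - t) * b 0 j)) by ring.
  by have := congr1 (fun x => x 0 i) vab; have := congr1 (fun x => x 0 j) vab;
    rewrite /= !mxE => <- <-; rewrite !vl2; lra.
apply/rowP => l.
have [i1 /andP[i1l _]] := exists_neq2 l l n3.
have [i2 /andP[i2l i2i1]] := exists_neq2 l i1 n3.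
have := tight l i1 _; have := tight l i2 _; have := tight i1 i2 _.
rewrite ![l == _]eq_sym i1l i2l eq_sym i2i1 => /(_ isT) t12 /(_ isT) t2 /(_ isT) t1.
have val : v 0 l * a 0 l = 1/4 by lra.
apply: (mulfI (x := v 0 l)); first by rewrite -normr_eq0 v_half gt_eqF //; lra.
by rewrite val vl2.
Qed.

Lemma VP_extreme v a b (t : R) : (2 < n)%N -> VP v ->
  normP_le1 a -> normP_le1 b -> 0 < t < 1 -> v = t *: a + (1 - t) *: b -> a = v.
Proof.
by move=> n3 [v_unit | v_half]; [apply: unit_vertex_extreme (ltnW n3) v_unit | apply: half_vertex_extreme].
Qed.

Lemma VP_vertex v : (2 < n)%N -> VP v -> vertexDn v.
Proof.
move=> n3 vVP; split; first exact: normP_le1_voronoi (ltnW n3) (VP_normP_le1 vVP).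
move=> a b t /voronoi_normP_le1 aP /voronoi_normP_le1 bP t01 vab.
have t01' : 0 < 1 - t < 1 by case/andP: t01 => t0 t1; apply/andP; split; lra.
have vba : v = (1 - t) *: b + (1 - (1 - t)) *: a by rewrite subKr addrC.
by rewrite (VP_extreme n3 vVP aP bP t01 vab) (VP_extreme n3 vVP bP aP t01' vba).
Qed.

Definition normP_ge2 x := exists i j, i != j /\ 2 <= `|x 0 i| + `|x 0 j|.

Lemma unit_add_unit a b : (1 < n)%N -> unit_vertex a -> unit_vertex b ->
  a + b = 0 \/ normP_ge2 (a + b).
Proof.
move=> n2 [k [ak a0]] [k' [bk' b0]].
have [ekk' | kk'] := eqVneq k k'; last first.
  right; exists k, k'; split=> //.
  by rewrite !mxE (a0 k') 1?eq_sym // (b0 k) // addr0 add0r ak bk'; lra.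
subst k'; have [j jk] := exists_neq k n2.
have [e | e] := normD_cases (a 0 k) (b 0 k); rewrite ak bk' in e.
- right; exists k, j; split; first by rewrite eq_sym.
  by rewrite !mxE e a0 // b0 // addr0 normr0; lra.
- left; apply/rowP => l; rewrite !mxE; have [-> | lk] := eqVneq l k.
    by apply: normr0_eq0; rewrite e subrr normr0.
  by rewrite a0 // b0 // addr0.
Qed.

Lemma unit_add_half a b : (1 < n)%N -> unit_vertex a -> half_vertex b ->
  half_vertex (a + b) \/ normP_ge2 (a + b).
Proof.
move=> n2 [k [ak a0]] b_half.
have other l : l != k -> `|(a + b) 0 l| = 1/2 by move=> lk; rewrite !mxE a0 // add0r b_half.
have [j jk] := exists_neq k n2.
have [e | e] := normD_cases (a 0 k) (b 0 k); rewrite ak b_half in e.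
- right; exists k, j; split; first by rewrite eq_sym.
  by rewrite (other j) // mxE e; lra.
- left=> l; have [-> | lk] := eqVneq l k; last exact: other.
  by rewrite mxE e ger0_norm; lra.
Qed.

Lemma half_add_half a b : half_vertex a -> half_vertex b ->
  [\/ a + b = 0, unit_vertex (a + b) | normP_ge2 (a + b)].
Proof.
move=> a_half b_half.
have entry l : (a + b) 0 l = 0 \/ `|(a + b) 0 l| = 1.
  rewrite mxE; have [e | e] := normD_cases (a 0 l) (b 0 l); rewrite a_half b_half in e.
  - by right; rewrite e; lra.
  - by left; apply: normr0_eq0; rewrite e subrr normr0.
have [k /= ck | zero] := pickP [pred k | (a + b) 0 k != 0]; last first.
  by constructor 1; apply/rowP => l; have /= /negbFE /eqP -> := zero l; rewrite mxE.
have ck1 : `|(a + b) 0 k| = 1 by case: (entry k) => // e; rewrite e eqxx in ck.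
have [j /andP[jk cj] | rest] := pickP [pred j | (j != k) && ((a + b) 0 j != 0)].
- constructor 3; exists k, j; split; first by rewrite eq_sym.
  by case: (entry j) => e; [rewrite e eqxx in cj | rewrite ck1 e; lra].
- constructor 2; exists k; split=> // l lk.
  by have /= := rest l; rewrite lk => /negbFE /eqP.
Qed.

Lemma VP_add a b : (1 < n)%N -> VP a -> VP b -> a + b != 0 -> ~ VP (a + b) ->
  normP_ge2 (a + b).
Proof.
move=> n2 [a_unit | a_half] [b_unit | b_half] ab0 abVP.
- by case: (unit_add_unit n2 a_unit b_unit) => // e; rewrite e eqxx in ab0.
- by case: (unit_add_half n2 a_unit b_half) => // ab_half; case: abVP; right.
- rewrite addrC in abVP *.
  by case: (unit_add_half n2 b_unit a_half) => // ab_half; case: abVP; right.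
- case: (half_add_half a_half b_half) => [e | ab_unit | //].
    by rewrite e eqxx in ab0.
  by case: abVP; left.
Qed.

Lemma normP_eq_max_pair x (c : R) : (1 < n)%N -> 0 < c ->
  (forall i j, i != j -> `|x 0 i| + `|x 0 j| <= c) ->
  (exists i j, i != j /\ c <= `|x 0 i| + `|x 0 j|) -> normP_eq x c.
Proof.
move=> n2 c0 x_le [i [j [ij x_ge]]]; split.
  move=> l l0 [z [/voronoi_normP_le1 zP xz]].
  move: x_ge; rewrite xz !mxE !normrM (ger0_norm l0) -mulrDr.
  by have := zP i j ij; nra.
move=> d d_le; apply: d_le (ltW c0) _.
exists (c^-1 *: x); split; last by rewrite scalerA divff ?gt_eqF // scale1r.
apply: normP_le1_voronoi n2 _ => p q pq.
have c_inv : 0 < c^-1 by rewrite invr_gt0.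
by rewrite !mxE !normrM (gtr0_norm c_inv) -mulrDr mulrC ler_pdivrMr // mul1r; exact: x_le.
Qed.

End VoronoiRegion.

Section CayleyGraph.
Variables (R : realFieldType) (n : nat).
Implicit Types u v : 'rV[R]_n.

Lemma walk0 u : Gvert u -> walk 0 u u.
Proof. by move=> Gu; exists (fun=> u). Qed.

Lemma walk1 u v : Gvert u -> Gvert v -> Gadj u v -> walk 1 u v.
Proof.
move=> Gu Gv uv; exists (fun i => if i == 0%N then u else v); split=> //.
  by case=> [|[|i]].
by case.
Qed.

End CayleyGraph.

Theorem lemma14 (R : realFieldType) (n : nat) (hn : (4 <= n)%N)
  (u1 u2 : 'rV[R]_n) :
  Gvert u1 -> Gvert u2 -> gdist_eq u1 u2 2 -> normP_eq (u1 - u2) 1.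
Proof.
move=> G1 G2 [[w [w0 w2 _ wA]] shorter].
have n3 : (2 < n)%N by exact: ltnW.
have n2 : (1 < n)%N by exact: ltnW.
set a := 2%:R *: (w 0%N - w 1%N); set b := 2%:R *: (w 1%N - w 2%N).
have aVP : VP a := vertex_VP n3 (wA 0%N isT).
have bVP : VP b := vertex_VP n3 (wA 1%N isT).
have ab : a + b = 2%:R *: (u1 - u2) by rewrite -scalerDr addrA subrK w0 w2.
clearbody a b.
have ab0 : a + b != 0.
  apply/eqP; rewrite ab => /eqP; rewrite scaler_eq0 pnatr_eq0 subr_eq0 /= => /eqP u12.
  by apply: (shorter 0%N isT); rewrite -u12; exact: walk0.
have abVP : ~ VP (a + b).
  by rewrite ab => /(VP_vertex n3) adj; apply: (shorter 1%N isT); exact: walk1.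
have x_half l : `|(u1 - u2) 0 l| = `|(a + b) 0 l| / 2.
  by rewrite ab [in RHS]mxE normrM ger0_norm //; field.
have [i [j [ij ab_ge]]] := VP_add n2 aVP bVP ab0 abVP.
apply: normP_eq_max_pair n2 ltr01 _ _.
- move=> p q pq; rewrite !x_half !mxE.
  have := VP_normP_le1 aVP pq; have := VP_normP_le1 bVP pq.
  by have := ler_normD (a 0 p) (b 0 p); have := ler_normD (a 0 q) (b 0 q); lra.
- by exists i, j; rewrite !x_half; split=> //; lra.
Qed.
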